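(* Let $F$ be a DQCNF and let $\varphi,\psi$ be autarkies for $F$. Then the composition $\varphi\circ\psi$, defined on $\mathrm{dom}(\varphi)\cup\mathrm{dom}(\psi)$ by $(\varphi\circ\psi)(y)=\psi(y)$ for $y\in\mathrm{dom}(\psi)$ and $(\varphi\circ\psi)(y)=\varphi(y)$ for $y\in\mathrm{dom}(\varphi)\setminus\mathrm{dom}(\psi)$, is again an autarky for $F$.
   Context: A DQCNF $F$ consists of a set $X$ of universal variables, a set $Y$ of existential variables, a dependency set $D_y\subseteq X$ for each $y\in Y$, and a matrix, a finite set of clauses over $X\cup Y$. An autarky for $F$ is a partial map $\varphi$ from a subset $\mathrm{dom}(\varphi)\subseteq Y$ to Boolean functions, where $\varphi(y)$ depends only on variables in $D_y$, such that every clause $C$ of $F$ either contains no variable of $\mathrm{dom}(\varphi)$ (then $\varphi$ does not touch $C$), or becomes a tautology (identically true as a function of all remaining variables) after substituting $\varphi(y)$ for each $y\in\mathrm{dom}(\varphi)$ occurring in $C$. *)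

From mathcomp Require Import all_boot.
Set Implicit Arguments. Unset Strict Implicit. Unset Printing Implicit Defensive.

(* Variables: universal ones of type X, existential ones of type Y (finite). *)
(* A literal is a variable together with a polarity (true = positive).      *)
Definition literal (X Y : finType) := ((X + Y) * bool)%type.
Definition clause (X Y : finType) := seq (literal X Y).

Record DQCNF (X Y : finType) := {
  dep : Y -> {set X};
  matrix : seq (clause X Y)
}.

Definition boolfun (X : finType) := (X -> bool) -> bool.

Definition depends_only_on (X : finType) (f : boolfun X) (S : {set X}) : Prop :=
  forall a b : X -> bool, (forall x, x \in S -> a x = b x) -> f a = f b.

Definition ppmap (X Y : finType) := Y -> option (boolfun X).

Definition in_dom (X Y : finType) (phi : ppmap X Y) (y : Y) : bool :=
  if phi y is Some _ then true else false.

Definition touches (X Y : finType) (phi : ppmap X Y) (C : clause X Y) : bool :=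
  has (fun l : literal X Y => match l.1 with inl _ => false | inr y => in_dom phi y end) C.

Definition eval_lit (X Y : finType) (a : X -> bool) (b : Y -> bool) (l : literal X Y) : bool :=
  (match l.1 with inl x => a x | inr y => b y end) == l.2.

Definition eval_clause (X Y : finType) (a : X -> bool) (b : Y -> bool) (C : clause X Y) : bool :=
  has (eval_lit a b) C.

Definition subst (X Y : finType) (phi : ppmap X Y) (a : X -> bool) (b : Y -> bool) : Y -> bool :=
  fun y => match phi y with Some f => f a | None => b y end.

Definition tautology_after (X Y : finType) (phi : ppmap X Y) (C : clause X Y) : Prop :=
  forall (a : X -> bool) (b : Y -> bool), eval_clause a (subst phi a b) C.

Definition is_autarky (X Y : finType) (F : DQCNF X Y) (phi : ppmap X Y) : Prop :=
  (forall y f, phi y = Some f -> depends_only_on f (dep F y)) /\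
  (forall C, C \in matrix F -> ~~ touches phi C \/ tautology_after phi C).

Definition compose (X Y : finType) (phi psi : ppmap X Y) : ppmap X Y :=
  fun y => match psi y with Some f => Some f | None => phi y end.

From mathcomp Require Import all_boot.

(* On a clause touched by psi the composition agrees with psi, which already
   makes it a tautology.  A clause untouched by psi only sees phi's values
   under the composition, so it is either untouched or satisfied through phi. *)

Section Composition.

Variables X Y : finType.
Implicit Types (phi psi : ppmap X Y) (C : clause X Y).

Lemma in_dom_compose phi psi y :
  in_dom (compose phi psi) y = in_dom psi y || in_dom phi y.
Proof. by rewrite /in_dom /compose; case: (psi y). Qed.

Lemma touches_compose phi psi C :
  touches (compose phi psi) C = touches psi C || touches phi C.
Proof.
rewrite /touches -has_predU; apply: eq_has => l /=.
by case: l.1 => // y; rewrite in_dom_compose.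
Qed.

Lemma subst_compose phi psi a b y :
  subst (compose phi psi) a b y = subst psi a (subst phi a b) y.
Proof. by rewrite /subst /compose; case: (psi y). Qed.

Lemma eq_in_eval_clause a (b b' : Y -> bool) C :
  (forall l, l \in C -> forall y, l.1 = inr y -> b y = b' y) ->
  eval_clause a b C = eval_clause a b' C.
Proof.
move=> eq_bb'; apply: eq_in_has => l lC; rewrite /eval_lit.
by case E: l.1 => [//|y]; rewrite (eq_bb' l lC y E).
Qed.

Lemma eval_clause_compose phi psi a b C :
  eval_clause a (subst (compose phi psi) a b) C
  = eval_clause a (subst psi a (subst phi a b)) C.
Proof. by apply: eq_in_eval_clause => l _ y _; exact: subst_compose. Qed.

Lemma eval_clause_subst_untouched psi a b C :
  ~~ touches psi C -> eval_clause a (subst psi a b) C = eval_clause a b C.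
Proof.
move=> untouched; apply: eq_in_eval_clause => l lC y Ely.
rewrite /subst; case psi_y: (psi y) => [f|] //.
case/hasP: untouched; exists l => //.
by rewrite Ely /in_dom psi_y.
Qed.

Lemma tautology_after_compose_l phi psi C :
  tautology_after psi C -> tautology_after (compose phi psi) C.
Proof. by move=> taut a b; rewrite eval_clause_compose. Qed.

Lemma tautology_after_compose_r phi psi C :
  ~~ touches psi C -> tautology_after phi C ->
  tautology_after (compose phi psi) C.
Proof.
move=> untouched taut a b.
by rewrite eval_clause_compose eval_clause_subst_untouched.
Qed.

End Composition.

Theorem lemma3 (X Y : finType) (F : DQCNF X Y) (phi psi : ppmap X Y) :
  is_autarky F phi -> is_autarky F psi -> is_autarky F (compose phi psi).
Proof.
move=> [dep_phi taut_phi] [dep_psi taut_psi]; split.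
  move=> y f; rewrite /compose; case psi_y: (psi y) => [g|]; last exact: dep_phi.
  by case=> <-; exact: dep_psi psi_y.
move=> C CF; case: (taut_psi C CF) => [psi_untouched|psi_taut]; last first.
  by right; exact: tautology_after_compose_l.
case: (taut_phi C CF) => [phi_untouched|phi_taut].
  by left; rewrite touches_compose negb_or psi_untouched.
by right; exact: tautology_after_compose_r.
Qed.
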